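(* Let $G$ be a second countable locally compact group and $\Omega$ a homogeneous space of $G$. Let $F\subset P$ be closed subgroups of $G$, $Y\subset\Omega$ a compact $F$-minimal subset with $PY=Y$, and $M\subset G$ such that $mY\cap Y\neq\emptyset$ for every $m\in M$. Then $hY=Y$ for every $h\in N_G(F)\cap\overline{PMP}$.
   Context: $N_G(F)$ denotes the normalizer of $F$ in $G$. For a closed subgroup $F\subset G$, a closed $F$-invariant subset $Y\subset\Omega$ is called $F$-minimal if it contains no proper nonempty closed $F$-invariant subset, i.e. $Fy$ is dense in $Y$ for every $y\in Y$. *)

From Stdlib Require Import List Classical.
Set Implicit Arguments.

Definition subset {X : Type} (A B : X -> Prop) : Prop := forall x, A x -> B x.
Definition set_eq {X : Type} (A B : X -> Prop) : Prop := forall x, A x <-> B x.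

Definition is_topology {X : Type} (op : (X -> Prop) -> Prop) : Prop :=
  (forall U V, set_eq U V -> op U -> op V) /\
  op (fun _ => True) /\
  (forall U V, op U -> op V -> op (fun x => U x /\ V x)) /\
  (forall (I : Type) (U : I -> X -> Prop),
      (forall i, op (U i)) -> op (fun x => exists i, U i x)).

Definition closed {X : Type} (op : (X -> Prop) -> Prop) (A : X -> Prop) : Prop :=
  op (fun x => ~ A x).

Definition closure {X : Type} (op : (X -> Prop) -> Prop) (A : X -> Prop) (x : X) : Prop :=
  forall U, op U -> U x -> exists y, U y /\ A y.

Definition compact {X : Type} (op : (X -> Prop) -> Prop) (K : X -> Prop) : Prop :=
  forall (I : Type) (U : I -> X -> Prop),
    (forall i, op (U i)) -> (forall x, K x -> exists i, U i x) ->
    exists l : list I, forall x, K x -> exists i, In i l /\ U i x.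

Definition hausdorff {X : Type} (op : (X -> Prop) -> Prop) : Prop :=
  forall x y, x <> y -> exists U V, op U /\ op V /\ U x /\ V y /\
    (forall z, ~ (U z /\ V z)).

Definition locally_compact {X : Type} (op : (X -> Prop) -> Prop) : Prop :=
  forall x, exists U K, op U /\ U x /\ subset U K /\ compact op K.

Definition second_countable {X : Type} (op : (X -> Prop) -> Prop) : Prop :=
  exists B : nat -> X -> Prop, (forall n, op (B n)) /\
    (forall U x, op U -> U x -> exists n, B n x /\ subset (B n) U).

Definition continuous {X Y : Type} (opX : (X -> Prop) -> Prop) (opY : (Y -> Prop) -> Prop)
  (f : X -> Y) : Prop :=
  forall V, opY V -> opX (fun x => V (f x)).

Definition prod_open {X Y : Type} (opX : (X -> Prop) -> Prop) (opY : (Y -> Prop) -> Prop)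
  (W : X * Y -> Prop) : Prop :=
  forall p, W p -> exists U V, opX U /\ opY V /\ U (fst p) /\ V (snd p) /\
    (forall q, U (fst q) -> V (snd q) -> W q).

Definition is_group {G : Type} (mul : G -> G -> G) (inv : G -> G) (one : G) : Prop :=
  (forall a b c, mul a (mul b c) = mul (mul a b) c) /\
  (forall a, mul one a = a) /\ (forall a, mul a one = a) /\
  (forall a, mul (inv a) a = one) /\ (forall a, mul a (inv a) = one).

Definition is_topological_group {G : Type} (op : (G -> Prop) -> Prop)
  (mul : G -> G -> G) (inv : G -> G) (one : G) : Prop :=
  is_topology op /\ is_group mul inv one /\
  continuous (prod_open op op) op (fun p => mul (fst p) (snd p)) /\
  continuous op op inv.

Definition lcsc_group {G : Type} (op : (G -> Prop) -> Prop)
  (mul : G -> G -> G) (inv : G -> G) (one : G) : Prop :=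
  is_topological_group op mul inv one /\ hausdorff op /\
  locally_compact op /\ second_countable op.

Definition is_subgroup {G : Type} (mul : G -> G -> G) (inv : G -> G) (one : G)
  (H : G -> Prop) : Prop :=
  H one /\ (forall a b, H a -> H b -> H (mul a b)) /\ (forall a, H a -> H (inv a)).

Definition closed_subgroup {G : Type} (op : (G -> Prop) -> Prop)
  (mul : G -> G -> G) (inv : G -> G) (one : G) (H : G -> Prop) : Prop :=
  is_subgroup mul inv one H /\ closed op H.

Definition normalizer {G : Type} (mul : G -> G -> G) (inv : G -> G)
  (F : G -> Prop) (g : G) : Prop :=
  forall x, F x <-> F (mul (mul g x) (inv g)).

Definition setprod3 {G : Type} (mul : G -> G -> G) (A B C : G -> Prop) (g : G) : Prop :=
  exists a b c, A a /\ B b /\ C c /\ g = mul (mul a b) c.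

Definition is_action {G O : Type} (mul : G -> G -> G) (one : G) (act : G -> O -> O) : Prop :=
  (forall x, act one x = x) /\ (forall g h x, act (mul g h) x = act g (act h x)).

(* Omega is a homogeneous space of G, i.e. Omega is (homeomorphic, G-equivariantly, to)
   G/H for a closed subgroup H: a continuous transitive action such that for a base
   point x0 the orbit map g |-> g x0 is open and the stabilizer of x0 is closed. *)
Definition homogeneous_space {G O : Type} (opG : (G -> Prop) -> Prop)
  (mul : G -> G -> G) (one : G) (opO : (O -> Prop) -> Prop) (act : G -> O -> O) : Prop :=
  is_topology opO /\ is_action mul one act /\
  continuous (prod_open opG opO) opO (fun p => act (fst p) (snd p)) /\
  (forall x y, exists g, act g x = y) /\
  exists x0 : O,
    (forall U, opG U -> opO (fun y => exists g, U g /\ act g x0 = y)) /\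
    closed opG (fun g => act g x0 = x0).

Definition act_set {G O : Type} (act : G -> O -> O) (A : G -> Prop) (Y : O -> Prop) (z : O) : Prop :=
  exists a y, A a /\ Y y /\ z = act a y.

Definition translate {G O : Type} (act : G -> O -> O) (h : G) (Y : O -> Prop) (z : O) : Prop :=
  exists y, Y y /\ z = act h y.

Definition invariant {G O : Type} (act : G -> O -> O) (F : G -> Prop) (Y : O -> Prop) : Prop :=
  forall f y, F f -> Y y -> Y (act f y).

Definition minimal {G O : Type} (opO : (O -> Prop) -> Prop) (act : G -> O -> O)
  (F : G -> Prop) (Y : O -> Prop) : Prop :=
  closed opO Y /\ invariant act F Y /\
  (forall Z, closed opO Z -> invariant act F Z -> (exists z, Z z) -> subset Z Y ->
     set_eq Z Y).

From Stdlib Require Import List Classical.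
Set Implicit Arguments.

(* The set of g with gY meeting Y is closed (Y compact) and contains PMP (Y is P-invariant and
   every mY meets Y), so it contains h. For an element g normalizing F, Y ∩ g^-1 Y is closed and
   F-invariant, so once nonempty it is all of Y by minimality, i.e. gY ⊆ Y. Applying this to h and
   to h^-1 (both normalize F, and h^-1 Y meets Y as soon as hY does) gives hY = Y. *)

Section Topology.

Variables (X : Type) (op : (X -> Prop) -> Prop).
Hypothesis top : is_topology op.

Lemma open_of_locally_open (A : X -> Prop) :
  (forall x, A x -> exists U, op U /\ U x /\ subset U A) -> op A.
Proof.
  intros H. destruct top as [ext [_ [_ union]]].
  set (I := {S : X -> Prop | op S /\ subset S A}).
  apply ext with (fun x => exists i : I, proj1_sig i x).
  - intro x; split.
    + intros [[S [opS SA]] Sx]. exact (SA x Sx).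
    + intros Ax. destruct (H x Ax) as [U [opU [Ux UA]]].
      exists (exist _ U (conj opU UA)). exact Ux.
  - apply union. intros [S [opS SA]]. exact opS.
Qed.

Lemma open_list_inter (I : Type) (A : I -> X -> Prop) :
  (forall i, op (A i)) -> forall l : list I, op (fun x => forall i, In i l -> A i x).
Proof.
  intros opA. destruct top as [ext [full [inter _]]].
  induction l as [|a l IH].
  - apply ext with (fun _ => True); [|exact full].
    intro x; split; [intros _ i []|trivial].
  - apply ext with (fun x => A a x /\ forall i, In i l -> A i x); [|now apply inter].
    intro x; split.
    + intros [Hax Hlx] i [<-|Hi]; auto.
    + intros Hx; split; [apply Hx; now left|intros i Hi; apply Hx; now right].
Qed.

Lemma closed_inter (A B : X -> Prop) :
  closed op A -> closed op B -> closed op (fun x => A x /\ B x).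
Proof.
  intros clA clB. apply open_of_locally_open. intros x Hx.
  destruct (not_and_or _ _ Hx) as [nA|nB].
  - exists (fun z => ~ A z). repeat split; auto. intros z nAz [Az _]. exact (nAz Az).
  - exists (fun z => ~ B z). repeat split; auto. intros z nBz [_ Bz]. exact (nBz Bz).
Qed.

Lemma closure_sub_closed (A C : X -> Prop) :
  closed op C -> subset A C -> subset (closure op A) C.
Proof.
  intros clC AC x clx. apply NNPP. intros nCx.
  destruct (clx _ clC nCx) as [y [nCy Ay]]. exact (nCy (AC y Ay)).
Qed.

End Topology.

Section Action.

Variables (G O : Type) (opG : (G -> Prop) -> Prop) (opO : (O -> Prop) -> Prop).
Variables (mul : G -> G -> G) (inv : G -> G) (one : G) (act : G -> O -> O).
Hypothesis grp : is_group mul inv one.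
Hypothesis Hact : is_action mul one act.
Hypothesis topG : is_topology opG.
Hypothesis topO : is_topology opO.
Hypothesis act_cont : continuous (prod_open opG opO) opO (fun p => act (fst p) (snd p)).

Lemma inv_involutive (g : G) : inv (inv g) = g.
Proof.
  destruct grp as [mulA [mul1g [mulg1 [mulVg mulgV]]]].
  rewrite <- (mul1g (inv (inv g))), <- (mulgV g), <- mulA, mulgV, mulg1. reflexivity.
Qed.

Lemma act_invK (g : G) (y : O) : act (inv g) (act g y) = y.
Proof.
  destruct grp as [_ [_ [_ [mulVg _]]]]. destruct Hact as [act1 actM].
  rewrite <- actM, mulVg. apply act1.
Qed.

Lemma act_K_inv (g : G) (y : O) : act g (act (inv g) y) = y.
Proof. rewrite <- (inv_involutive g) at 1. apply act_invK. Qed.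

Lemma closed_translate_preimage (g : G) (V : O -> Prop) :
  closed opO V -> closed opO (fun z => V (act g z)).
Proof.
  intros clV. unfold closed. apply open_of_locally_open; [exact topO|]. intros z nVgz.
  destruct (act_cont clV (g, z) nVgz) as [U [W [_ [opW [Ug [Wz UW]]]]]].
  exists W. repeat split; auto. intros w Ww. exact (UW (g, w) Ug Ww).
Qed.

Definition meets_translate (Y : O -> Prop) (g : G) : Prop := exists y, Y y /\ Y (act g y).

Lemma meets_translate_inv (Y : O -> Prop) (g : G) :
  meets_translate Y g -> meets_translate Y (inv g).
Proof. intros [y [Yy Ygy]]. exists (act g y). rewrite act_invK. auto. Qed.

(* A tube-lemma argument: finitely many product neighbourhoods of (g, y), y in Y, avoiding
   the open set of pairs (a, x) with a x outside Y. *)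
Lemma closed_meets_translate (Y : O -> Prop) :
  compact opO Y -> closed opO Y -> closed opG (meets_translate Y).
Proof.
  intros cptY clY. unfold closed. apply open_of_locally_open; [exact topG|]. intros g not_meets.
  set (I := {p : (G -> Prop) * (O -> Prop) | opG (fst p) /\ opO (snd p) /\ fst p g /\
              forall a y, fst p a -> snd p y -> ~ Y (act a y)}).
  destruct (cptY I (fun i => snd (proj1_sig i))) as [l cover].
  - intros [p [opU [opV rest]]]. exact opV.
  - intros y Yy.
    assert (nYgy : ~ Y (act g y)) by (intros Ygy; apply not_meets; now exists y).
    destruct (act_cont clY (g, y) nYgy) as [U [V [opU [opV [Ug [Vy UV]]]]]].
    exists (exist _ (U, V) (conj opU (conj opV (conj Ug
      (fun a x (Ua : U a) (Vx : V x) => UV (a, x) Ua Vx))))).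
    exact Vy.
  - exists (fun a => forall i, In i l -> fst (proj1_sig i) a). split; [|split].
    + apply open_list_inter; [exact topG|]. intros [p [opU rest]]. exact opU.
    + intros [p [opU [opV [Ug avoid]]]] _. exact Ug.
    + intros a Ua [y [Yy Yay]]. destruct (cover y Yy) as [[p Hp] [inl Vy]].
      exact (proj2 (proj2 (proj2 Hp)) a y (Ua _ inl) Vy Yay).
Qed.

Lemma meets_translate_prod (P M : G -> Prop) (Y : O -> Prop) :
  is_subgroup mul inv one P -> invariant act P Y ->
  (forall m, M m -> meets_translate Y m) ->
  subset (setprod3 mul P M P) (meets_translate Y).
Proof.
  intros [_ [_ Pinv]] PY MY g [p [m [p' [Pp [Mm [Pp' ->]]]]]].
  destruct (MY m Mm) as [y [Yy Ymy]]. destruct Hact as [_ actM].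
  exists (act (inv p') y). split; [apply PY; [now apply Pinv|exact Yy]|].
  rewrite !actM, act_K_inv. now apply PY.
Qed.

Lemma minimal_translate_sub (F : G -> Prop) (Y : O -> Prop) (g : G) :
  minimal opO act F Y ->
  (forall f, F f -> F (mul (mul g f) (inv g))) -> meets_translate Y g ->
  forall y, Y y -> Y (act g y).
Proof.
  intros minY normal [y0 Y0] y Yy. destruct minY as [clY [FY min]].
  destruct grp as [mulA [_ [mulg1 [mulVg _]]]]. destruct Hact as [_ actM].
  assert (inv_Z : invariant act F (fun z => Y z /\ Y (act g z))).
  { intros f z Ff [Yz Ygz]. split; [now apply FY|].
    replace (act g (act f z)) with (act (mul (mul g f) (inv g)) (act g z)).
    - apply FY; [now apply normal|exact Ygz].
    - rewrite <- !actM, <- (mulA (mul g f)), mulVg, mulg1. reflexivity. }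
  assert (cl_Z : closed opO (fun z => Y z /\ Y (act g z))).
  { apply closed_inter; [exact topO|exact clY|]. now apply closed_translate_preimage. }
  apply (min _ cl_Z inv_Z (ex_intro _ y0 Y0) (fun z Hz => proj1 Hz)). exact Yy.
Qed.

Lemma normalizer_inv (F : G -> Prop) (h : G) :
  normalizer mul inv F h -> forall f, F f -> F (mul (mul (inv h) f) (inv (inv h))).
Proof.
  intros Nh f Ff. apply (proj2 (Nh _)). rewrite inv_involutive.
  destruct grp as [mulA [mul1g [mulg1 [_ mulgV]]]].
  rewrite !mulA, mulgV, mul1g, <- mulA, mulgV, mulg1. exact Ff.
Qed.

End Action.

Theorem corollary3p3
  (G : Type) (opG : (G -> Prop) -> Prop) (mul : G -> G -> G) (inv : G -> G) (one : G)
  (O : Type) (opO : (O -> Prop) -> Prop) (act : G -> O -> O)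
  (F P M : G -> Prop) (Y : O -> Prop) (h : G) :
  lcsc_group opG mul inv one ->
  homogeneous_space opG mul one opO act ->
  closed_subgroup opG mul inv one F ->
  closed_subgroup opG mul inv one P ->
  subset F P ->
  compact opO Y ->
  minimal opO act F Y ->
  set_eq (act_set act P Y) Y ->
  (forall m, M m -> exists z, translate act m Y z /\ Y z) ->
  normalizer mul inv F h ->
  closure opG (setprod3 mul P M P) h ->
  set_eq (translate act h Y) Y.
Proof.
  intros [[topG [grp _]] _] [topO [Hact [act_cont _]]] _ [Psub _] _ cptY minY PY MY Nh clh.
  assert (P_inv : invariant act P Y) by (intros p y Pp Yy; apply PY; now exists p, y).
  assert (M_meets : forall m, M m -> meets_translate act Y m).
  { intros m Mm. destruct (MY m Mm) as [z [[y [Yy ->]] Ymy]]. now exists y. }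
  assert (h_meets : meets_translate act Y h).
  { pose proof (closed_meets_translate act topG act_cont cptY (proj1 minY)) as closed_meets.
    pose proof (meets_translate_prod grp Hact Psub P_inv M_meets) as PMP_meets.
    exact (closure_sub_closed closed_meets PMP_meets clh). }
  pose proof (fun g => minimal_translate_sub grp Hact topO act_cont (g := g) minY) as translate_sub.
  assert (hY : forall y, Y y -> Y (act h y)).
  { apply translate_sub; [intros f Ff; exact (proj1 (Nh f) Ff)|exact h_meets]. }
  assert (hinvY : forall y, Y y -> Y (act (inv h) y)).
  { apply translate_sub; [exact (normalizer_inv grp Nh)|].
    exact (meets_translate_inv grp Hact h_meets). }
  intros z; split.
  - intros [y [Yy ->]]. auto.
  - intros Yz. exists (act (inv h) z). split; auto. symmetry. exact (act_K_inv grp Hact h z).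
Qed.
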